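(* Assume $\psi$ has conductor $\mathfrak o$ and the Haar measure on $F$ gives $\mathfrak o$ volume $1$. Let $(\pi,V)$ be a smooth representation of $\mathrm{GSp}(4,F)$ and $p:V\to V_{Z^J,\psi}$ the projection. For every $w\in V_{Z^J,\psi}$ there exists a unique $v\in V$ such that: (i) $p(v)=w$; (ii) $\pi(z(x))v=v$ for all $x\in\mathfrak o$; (iii) $\int_{\mathfrak p^{-1}}\pi(z(x))v\,dx=0$; (iv) $\pi(d(c))v=v$ for all $c\in\mathfrak o^\times$.
   Context: $F$ non-archimedean local field of characteristic zero with ring of integers $\mathfrak o$ and maximal ideal $\mathfrak p$; $\psi$ a non-trivial character of $F$; conductor $\mathfrak o$ means $\psi$ is trivial on $\mathfrak o$ but not on $\mathfrak p^{-1}$. $\mathrm{GSp}(4,F)$: similitudes of $J=\begin{bmatrix}&&&1\\&&1\\&-1\\-1\end{bmatrix}$. $d(c)=\mathrm{diag}(1,1,c,c)$, $z(x)=1_4+xE_{14}$ (identity matrix with $x$ in position $(1,4)$), $Z^J=\{z(x)\}$, $V_{Z^J,\psi}=V/\mathrm{span}\{\pi(z(x))v-\psi(x)v: x\in F,v\in V\}$. *)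

From HB Require Import structures.
From mathcomp Require Import all_boot all_order all_algebra.
From mathcomp Require Import reals.
From mathcomp Require Import complex.
Set Implicit Arguments. Unset Strict Implicit. Unset Printing Implicit Defensive.
Import Order.TTheory GRing.Theory Num.Theory.
Local Open Scope ring_scope.

(* A normalized discrete valuation val : F -> int (its value at 0 is
   irrelevant: 0 is treated as having valuation +oo everywhere below). *)

Definition in_pn (F : fieldType) (val : F -> int) (n : int) (x : F) : bool :=
  (x == 0) || (n <= val x).

Definition in_o (F : fieldType) (val : F -> int) (x : F) : bool := in_pn val 0 x.

Definition unit_o (F : fieldType) (val : F -> int) (x : F) : bool :=
  (x != 0) && (val x == 0).

Definition local_field_char0 (F : fieldType) (val : F -> int) : Prop :=
  [/\
      (forall x y : F, x != 0 -> y != 0 -> val (x * y) = val x + val y),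
      (forall x y : F, x != 0 -> y != 0 -> x + y != 0 ->
          Num.min (val x) (val y) <= val (x + y)),
      (* normalized (hence surjective onto int) discrete valuation *)
      (exists varpi : F, varpi != 0 /\ val varpi = 1)
    & (* finite residue field o/p *)
      [/\ (exists s : seq F, all (in_o val) s /\
          forall x, in_o val x -> (exists2 a, a \in s & in_pn val 1 (x - a))),
      (forall u : nat -> F,
          (forall n : int, exists N : nat, forall m k : nat,
              (N <= m)%N -> (N <= k)%N -> in_pn val n (u m - u k)) ->
          exists l : F, forall n : int, exists N : nat, forall m : nat,
              (N <= m)%N -> in_pn val n (u m - l))
    &
      (forall n : nat, (n.+1)%:R != 0 :> F)]].

Definition add_char (F : fieldType) (C : ringType) (psi : F -> C) : Prop :=
  forall x y : F, psi (x + y) = psi x * psi y.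

Definition nontrivial_char (F : fieldType) (C : ringType) (psi : F -> C) : Prop :=
  exists x : F, psi x != 1.

Definition conductor_o (F : fieldType) (val : F -> int) (C : ringType)
    (psi : F -> C) : Prop :=
  (forall x, in_o val x -> psi x = 1) /\
  (exists x, in_pn val (-1) x /\ psi x != 1).

Definition Jmx (F : fieldType) : 'M[F]_4 :=
  \matrix_(i < 4, j < 4)
     (if (i + j == 3)%N then (if (i < 2)%N then 1 else -1) else 0).

Definition in_GSp4 (F : fieldType) (g : 'M[F]_4) : Prop :=
  exists lam : F, lam != 0 /\ g^T *m Jmx F *m g = lam *: Jmx F.

Definition dmx (F : fieldType) (c : F) : 'M[F]_4 :=
  diag_mx (\row_(j < 4) (if (j < 2)%N then 1 else c)).

Definition zmx (F : fieldType) (x : F) : 'M[F]_4 :=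
  1%:M + x *: delta_mx (0 : 'I_4) (3 : 'I_4).

Definition in_Kn (F : fieldType) (val : F -> int) (n : nat) (g : 'M[F]_4) : Prop :=
  in_GSp4 g /\ forall i j, in_pn val n%:Z ((g - 1%:M) i j).

Definition smooth_rep (F : fieldType) (val : F -> int) (C : ringType)
    (V : lmodType C) (pi : 'M[F]_4 -> V -> V) : Prop :=
  [/\ (forall g, in_GSp4 g -> linear (pi g)),
      (forall v, pi 1%:M v = v),
      (forall g h v, in_GSp4 g -> in_GSp4 h -> pi (g *m h) v = pi g (pi h v))
    & (* smoothness: every vector has an open stabilizer *)
      (forall v, exists n : nat, (0 < n)%N /\
           forall g, in_Kn val n g -> pi g v = v)].

(* ---------- the kernel of p : V -> V_{Z^J,psi} ---------- *)
Definition in_ZJ_span (F : fieldType) (C : ringType) (V : lmodType C)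
    (pi : 'M[F]_4 -> V -> V) (psi : F -> C) (w : V) : Prop :=
  exists s : seq (C * F * V),
    w = \sum_(t <- s) t.1.1 *: (pi (zmx t.1.2) t.2 - psi t.1.2 *: t.2).

Definition reps_mod (F : fieldType) (val : F -> int) (m : int) (N : nat)
    (rs : seq F) : Prop :=
  [/\ all (in_pn val m) rs,
      (forall x, in_pn val m x -> (exists2 a, a \in rs & in_pn val N%:Z (x - a)))
    & (forall i j, (i < size rs)%N -> (j < size rs)%N ->
         in_pn val N%:Z (nth 0 rs i - nth 0 rs j) -> i = j)].

(* For f invariant under p^N-translations on p^{-1}, the
   integral is vol(p^N) * sum over cosets, and vol(p^N) = 1/[o : p^N]
   because vol(o) = 1. *)
Definition is_integral_pinv (F : fieldType) (val : F -> int) (C : fieldType)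
    (V : lmodType C) (f : F -> V) (I : V) : Prop :=
  exists N : nat,
    (forall x y, in_pn val (-1) x -> in_pn val N%:Z y -> f (x + y) = f x) /\
    exists ro rp : seq F,
      [/\ reps_mod val 0 N ro, reps_mod val (-1) N rp
        & I = (size ro)%:R^-1 *: \sum_(a <- rp) f a].

(* If u is fixed by z(p^n) and d(1 + p^n), the sum E of psi(-y) z(y) u over
   y in p^-n / p^n transforms under z(p^-n) by psi and is congruent to
   [p^-n : p^n] u modulo the Z^J-span.  Averaging d(c) E over c in o^x / (1 + p^n)
   gives v: the terms with c not congruent to 1 transform by psi(c .) <> psi and
   so lie in the span, and orthogonality of characters of p^-1 / o makes the
   integral vanish.  For uniqueness, a vector w of the span fixed by z(o) is
   killed by the psi-average over p^-M / o for large M.  If w is also fixed by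
   d(o^x) and has vanishing integral, every twisted sum of psi(-b y) z(y) w,
   b in o, vanishes (by d(b)-invariance for units, by the integral for b in p),
   and Fourier inversion over o / p^M recovers a nonzero multiple of w. *)

From mathcomp Require Import all_boot all_order all_algebra.
From mathcomp Require Import reals.
From mathcomp Require Import complex.
From mathcomp Require Import zify ring.
Set Implicit Arguments. Unset Strict Implicit. Unset Printing Implicit Defensive.
Import Order.TTheory GRing.Theory Num.Theory.
Local Open Scope ring_scope.

Section LinearFun.
Variables (R : pzRingType) (U W : lmodType R) (f : U -> W).
Hypothesis f_lin : linear f.

Lemma lin0 : f 0 = 0.
Proof.
have := f_lin 1 0 0; rewrite !scale1r !addr0 => h.
by apply: (addrI (f 0)); rewrite addr0 -h.
Qed.

Lemma linD u v : f (u + v) = f u + f v.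
Proof. by have := f_lin 1 u v; rewrite !scale1r. Qed.

Lemma linZ a u : f (a *: u) = a *: f u.
Proof. by rewrite -[a *: u]addr0 f_lin lin0 addr0. Qed.

Lemma linB u v : f (u - v) = f u - f v.
Proof. by rewrite linD -scaleN1r linZ scaleN1r. Qed.

Lemma lin_sum (I : Type) (r : seq I) (P : pred I) (g : I -> U) :
  f (\sum_(i <- r | P i) g i) = \sum_(i <- r | P i) f (g i).
Proof. exact: (big_morph f linD lin0). Qed.

End LinearFun.

Lemma sumr_const_seq (W : nmodType) (I : Type) (r : seq I) (x : W) :
  \sum_(i <- r) x = x *+ size r.
Proof. by rewrite big_const_seq count_predT; elim: (size r) => //= k ->; rewrite mulrS. Qed.

(** * Valuations and systems of representatives *)

Section LocalField.
Variables (F : fieldType) (val : F -> int).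
Hypothesis valM : forall x y : F, x != 0 -> y != 0 -> val (x * y) = val x + val y.
Hypothesis val_ultra : forall x y : F, x != 0 -> y != 0 -> x + y != 0 ->
  Num.min (val x) (val y) <= val (x + y).

Local Notation pn := (in_pn val).

Lemma val1 : val 1 = 0.
Proof.
have := valM (oner_neq0 F) (oner_neq0 F); rewrite mulr1 => h.
by apply: (addrI (val 1)); rewrite addr0 -h.
Qed.

Lemma valN x : val (- x) = val x.
Proof.
have [->|x0] := eqVneq x 0; first by rewrite oppr0.
have m10 : (-1 : F) != 0 by rewrite oppr_eq0 oner_neq0.
have valN1 : val (-1) = 0.
  have := valM m10 m10; rewrite mulrNN mulr1 val1 => h.
  have : val (-1) *+ 2 == 0 by rewrite mulr2n -h.
  by rewrite mulrn_eq0 => /eqP.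
by rewrite -mulN1r valM // valN1 add0r.
Qed.

Lemma valV x : x != 0 -> val x^-1 = - val x.
Proof.
move=> x0; have := valM x0 (invr_neq0 x0); rewrite divff // val1 => h.
by apply/eqP; rewrite -addr_eq0 addrC h.
Qed.

Lemma in_pn0 n : pn n 0.
Proof. by rewrite /in_pn eqxx. Qed.

Lemma in_pnE n x : x != 0 -> pn n x = (n <= val x).
Proof. by rewrite /in_pn => /negbTE ->. Qed.

Lemma in_pnN n x : pn n (- x) = pn n x.
Proof. by rewrite /in_pn oppr_eq0 valN. Qed.

Lemma in_pnD n x y : pn n x -> pn n y -> pn n (x + y).
Proof.
rewrite /in_pn; have [->|x0] := eqVneq x 0; first by rewrite add0r.
have [->|y0] := eqVneq y 0; first by move=> h _; rewrite addr0 (negbTE x0).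
have [->//|s0] := eqVneq (x + y) 0; rewrite /= => hx hy.
by apply: le_trans (val_ultra x0 y0 s0); rewrite le_min hx hy.
Qed.

Lemma in_pnB n x y : pn n x -> pn n y -> pn n (x - y).
Proof. by move=> hx hy; apply: in_pnD => //; rewrite in_pnN. Qed.

Lemma in_pnW m n x : m <= n -> pn n x -> pn m x.
Proof. by rewrite /in_pn => mn /orP [->//|h]; rewrite (le_trans mn h) orbT. Qed.

Lemma in_pnM a b x y : pn a x -> pn b y -> pn (a + b) (x * y).
Proof.
rewrite /in_pn; have [->|x0] := eqVneq x 0; first by rewrite mul0r eqxx.
have [->|y0] := eqVneq y 0; first by rewrite mulr0 eqxx.
by rewrite /= valM // => ha hb; rewrite lerD ?orbT.
Qed.

Lemma in_pn_subC n x y : pn n (x - y) = pn n (y - x).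
Proof. by rewrite -in_pnN opprB. Qed.

Lemma in_pn_sub_trans n x y z : pn n (x - y) -> pn n (y - z) -> pn n (x - z).
Proof. by move=> h1 h2; have := in_pnD h1 h2; rewrite addrA subrK. Qed.

Lemma val_addr_small x y :
  x != 0 -> pn (val x + 1) y -> x + y != 0 /\ val (x + y) = val x.
Proof.
move=> x0 hy.
have s0 : x + y != 0.
  apply/negP => /eqP h; have yx : y = - x by apply/eqP; rewrite -addr_eq0 addrC h.
  by move: hy; rewrite yx in_pnN in_pnE // gerDl.
split=> //; have [->|y0] := eqVneq y 0; first by rewrite addr0.
have hy' : val x + 1 <= val y by rewrite -in_pnE.
apply/eqP; rewrite eq_le; apply/andP; split; last first.
  have := val_ultra x0 y0 s0; rewrite ge_min => /orP [//|h].
  by apply: le_trans h; apply: le_trans hy'; rewrite lerDl.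
have ny0 : - y != 0 by rewrite oppr_eq0.
have := val_ultra s0 ny0; rewrite addrK => /(_ x0); rewrite valN ge_min.
by case/orP=> // h; move: (le_trans hy' h); rewrite gerDl.
Qed.

Lemma val_eq0_congr1 c : pn 1 (c - 1) -> c != 0 /\ val c = 0.
Proof.
move=> hc; have h1 : pn (val 1 + 1) (c - 1) by rewrite val1 add0r.
by have [] := val_addr_small (oner_neq0 F) h1; rewrite addrC subrK val1.
Qed.

Lemma unit_oP c : reflect (c != 0 /\ val c = 0) (unit_o val c).
Proof. by apply: (iffP andP) => -[-> /eqP]. Qed.

Lemma unit_o_neq0 c : unit_o val c -> c != 0.
Proof. by case/andP. Qed.

Lemma in_pn_unitMl n c x : unit_o val c -> pn n (c * x) = pn n x.
Proof.
move=> /unit_oP [c0 vc]; have [->|x0] := eqVneq x 0; first by rewrite mulr0.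
by rewrite !in_pnE ?mulf_neq0 // valM // vc add0r.
Qed.

Lemma unit_o_in_o c : unit_o val c -> in_o val c.
Proof. by move=> /unit_oP [c0 vc]; rewrite /in_o in_pnE // vc. Qed.

Lemma unit_o1 : unit_o val 1.
Proof. by apply/unit_oP; rewrite oner_neq0 val1. Qed.

Lemma unit_oM c c' : unit_o val c -> unit_o val c' -> unit_o val (c * c').
Proof.
move=> /unit_oP [c0 vc] /unit_oP [c'0 vc'].
by apply/unit_oP; rewrite mulf_neq0 // valM // vc vc'.
Qed.

Lemma unit_oV c : unit_o val c -> unit_o val c^-1.
Proof. by move=> /unit_oP [c0 vc]; apply/unit_oP; rewrite invr_eq0 valV // vc. Qed.

Lemma unit_o_congr x y : unit_o val x -> pn 1 (x - y) -> unit_o val y.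
Proof.
move=> /unit_oP [x0 vx] hxy.
have h : pn (val x + 1) (y - x) by rewrite vx add0r in_pn_subC.
by have [] := val_addr_small x0 h; rewrite addrC subrK vx => y0 vy; apply/unit_oP.
Qed.

Lemma in_o_nonunit c : in_o val c -> ~~ unit_o val c -> pn 1 c.
Proof.
rewrite /in_o /unit_o; have [->|c0] := eqVneq c 0; first by rewrite !in_pn0.
by rewrite !in_pnE //= => h1 h2; rewrite -gtz0_ge1 lt_neqAle eq_sym h2.
Qed.

Lemma in_pn_neg_val x : exists m : nat, pn (- m%:Z) x.
Proof.
have [->|x0] := eqVneq x 0; first by exists 0%N; apply: in_pn0.
by exists `|val x|%N; rewrite in_pnE // abszE; apply: lerNnormlW.
Qed.

Definition reps (A : pred F) (n : int) (rs : seq F) : Prop :=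
  [/\ all A rs,
      (forall x, A x -> exists2 a, a \in rs & pn n (x - a))
    & (forall i j, (i < size rs)%N -> (j < size rs)%N ->
         pn n (nth 0 rs i - nth 0 rs j) -> i = j)].

Lemma reps_mem A n rs x : reps A n rs -> x \in rs -> A x.
Proof. by case=> /allP h _ _ /h. Qed.

Lemma reps_eq A n rs a b :
  reps A n rs -> a \in rs -> b \in rs -> pn n (a - b) -> a = b.
Proof.
case=> _ _ h ha hb hab.
have := h (index a rs) (index b rs); rewrite !index_mem !nth_index // => /(_ ha hb hab) e.
by rewrite -(nth_index 0 ha) e nth_index.
Qed.

Lemma reps_uniq A n rs : reps A n rs -> uniq rs.
Proof.
case=> _ _ h; apply/(uniqP 0) => i j; rewrite !inE => hi hj e.
by apply: h => //; rewrite e subrr in_pn0.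
Qed.

Lemma reps_of_uniq A n rs : all A rs ->
  (forall x, A x -> exists2 a, a \in rs & pn n (x - a)) -> uniq rs ->
  (forall a b, a \in rs -> b \in rs -> pn n (a - b) -> a = b) -> reps A n rs.
Proof.
move=> hA hc hu he; split => // i j hi hj hij.
by apply/(uniqP 0 hu) => //; apply: he => //; apply: mem_nth.
Qed.

Definition choose_rep (rs : seq F) n (x : F) :=
  nth 0 rs (find (fun b => pn n (x - b)) rs).

Lemma choose_repP rs n x : (exists2 a, a \in rs & pn n (x - a)) ->
  choose_rep rs n x \in rs /\ pn n (x - choose_rep rs n x).
Proof.
move=> [a ha hxa]; have hh : has (fun b => pn n (x - b)) rs by apply/hasP; exists a.
by split; [rewrite /choose_rep mem_nth // -has_find | have := nth_find 0 hh].
Qed.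

Lemma choose_rep_congr rs n x y : pn n (x - y) -> choose_rep rs n x = choose_rep rs n y.
Proof.
move=> hxy; rewrite /choose_rep; congr nth; apply: eq_find => b.
by apply/idP/idP => h; [rewrite in_pn_subC in hxy |]; apply: in_pn_sub_trans h.
Qed.

Lemma reps_choose A n rs x : reps A n rs -> A x ->
  choose_rep rs n x \in rs /\ pn n (x - choose_rep rs n x).
Proof. by case=> _ hc _ /hc; apply: choose_repP. Qed.

Section TwoSystems.
Variables (A : pred F) (n : int) (rs1 rs2 : seq F).
Hypotheses (h1 : reps A n rs1) (h2 : reps A n rs2).

Lemma map_choose_rep_uniq : uniq (map (choose_rep rs2 n) rs1).
Proof.
rewrite map_inj_in_uniq ?(reps_uniq h1) // => a b ha hb e; apply: (reps_eq h1 ha hb).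
have [_ p1] := reps_choose h2 (reps_mem h1 ha).
have [_ p2] := reps_choose h2 (reps_mem h1 hb).
by apply: in_pn_sub_trans p1 _; rewrite e in_pn_subC.
Qed.

Lemma map_choose_rep_sub : {subset map (choose_rep rs2 n) rs1 <= rs2}.
Proof. by move=> y /mapP [a ha ->]; have [] := reps_choose h2 (reps_mem h1 ha). Qed.

Lemma reps_size_le : (size rs1 <= size rs2)%N.
Proof.
rewrite -(size_map (choose_rep rs2 n)).
exact: uniq_leq_size map_choose_rep_uniq map_choose_rep_sub.
Qed.

End TwoSystems.

Lemma eq_big_reps (W : zmodType) A n rs1 rs2 (f : F -> W) :
  reps A n rs1 -> reps A n rs2 ->
  (forall x y, A x -> A y -> pn n (x - y) -> f x = f y) ->
  \sum_(x <- rs1) f x = \sum_(x <- rs2) f x.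
Proof.
move=> h1 h2 hf.
rewrite (@eq_big_seq _ _ _ _ _ _ (fun x => f (choose_rep rs2 n x))); last first.
  move=> x hx; have [hr p] := reps_choose h2 (reps_mem h1 hx).
  by apply: hf => //; [exact: reps_mem h1 hx | exact: reps_mem h2 hr].
rewrite -(big_map (choose_rep rs2 n) xpredT f); apply: perm_big.
have hsz : (size rs2 <= size (map (choose_rep rs2 n) rs1))%N.
  by rewrite size_map; exact: reps_size_le h2 h1.
have [_ eqs] := uniq_min_size (map_choose_rep_uniq h1 h2) (map_choose_rep_sub h1 h2) hsz.
exact: uniq_perm (map_choose_rep_uniq h1 h2) (reps_uniq h2) eqs.
Qed.

Lemma reps_map (A B : pred F) n m rs (phi : F -> F) : reps A n rs ->
  (forall x, A x -> B (phi x)) ->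
  (forall y, B y -> exists2 x, A x & phi x = y) ->
  (forall x y, A x -> A y -> pn n (x - y) = pn m (phi x - phi y)) ->
  reps B m (map phi rs).
Proof.
move=> h hAB hsurj hc; apply: reps_of_uniq.
- by apply/allP => y /mapP [x hx ->]; apply/hAB/(reps_mem h).
- move=> y hy; have [x hx <-] := hsurj y hy.
  have [_ hcov _] := h; have [a ha hxa] := hcov x hx.
  by exists (phi a); [exact: map_f | rewrite -hc //; apply: reps_mem h ha].
- rewrite map_inj_in_uniq ?(reps_uniq h) // => a b ha hb e.
  apply: (reps_eq h ha hb); rewrite hc ?e ?subrr ?in_pn0 //; exact: reps_mem h _.
- move=> a b /mapP [x hx ->] /mapP [y hy ->] e; congr phi.
  by apply: (reps_eq h hx hy); rewrite hc //; exact: reps_mem h _.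
Qed.

Lemma reps_filter (A B : pred F) n rs : reps A n rs -> {subset B <= A} ->
  (forall x y, B x -> A y -> pn n (x - y) -> B y) ->
  reps B n [seq a <- rs | B a].
Proof.
move=> h hBA hcl; apply: reps_of_uniq.
- exact: filter_all.
- move=> x hx; have [_ hc _] := h; have [a ha hxa] := hc x (hBA x hx).
  by exists a => //; rewrite mem_filter ha andbT; apply: hcl hx (reps_mem h ha) hxa.
- by rewrite filter_uniq // (reps_uniq h).
- by move=> a b; rewrite !mem_filter => /andP [_ ha] /andP [_ hb]; exact: reps_eq h ha hb.
Qed.

Lemma reps_filter_near A n rs x0 : reps A n rs -> A x0 ->
  exists a, [seq a <- rs | pn n (a - x0)] = [:: a].
Proof.
move=> h hx0; have [_ hc _] := h; have [a ha hxa] := hc x0 hx0.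
set s := filter _ _.
have ains : a \in s by rewrite mem_filter in_pn_subC ha hxa.
have hall : {subset s <= [:: a]}.
  move=> b; rewrite mem_filter inE => /andP [hb hbin]; apply/eqP.
  exact: (reps_eq h hbin ha (in_pn_sub_trans hb hxa)).
have hs : (size s <= 1)%N.
  by apply: (uniq_leq_size _ hall); rewrite filter_uniq // (reps_uniq h).
by exists a; case: s ains hall hs => [//|b [|c t]] //; rewrite inE => /eqP ->.
Qed.

Lemma reps_allpairs_addr a b c R1 R2 : a <= b -> b <= c ->
  reps (pn a) b R1 -> reps (pn b) c R2 ->
  reps (pn a) c [seq x + y | x <- R1, y <- R2].
Proof.
move=> ab bc h1 h2.
have key x1 y1 x2 y2 : x1 \in R1 -> y1 \in R2 -> x2 \in R1 -> y2 \in R2 ->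
    pn c ((x1 + y1) - (x2 + y2)) -> x1 = x2 /\ y1 = y2.
  move=> hx1 hy1 hx2 hy2 hc.
  have ex : x1 = x2.
    apply: (reps_eq h1 hx1 hx2).
    have -> : x1 - x2 = (x1 + y1 - (x2 + y2)) - (y1 - y2) by ring.
    by apply: in_pnB; [exact: in_pnW hc | apply: in_pnB; apply: (reps_mem h2)].
  split => //; apply: (reps_eq h2 hy1 hy2).
  by move: hc; rewrite ex opprD addrACA subrr add0r.
apply: reps_of_uniq.
- apply/allP => z /allpairsP [[x y] [hx hy ->]].
  by apply: in_pnD; [apply: (reps_mem h1) | apply: (in_pnW ab); apply: (reps_mem h2)].
- move=> z hz; have [_ hc1 _] := h1; have [_ hc2 _] := h2.
  have [x hx hzx] := hc1 z hz; have [y hy hzy] := hc2 (z - x) hzx.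
  by exists (x + y); [apply/allpairsP; exists (x, y) | rewrite opprD addrA].
- apply: allpairs_uniq; [exact: reps_uniq h1 | exact: reps_uniq h2 |].
  move=> [x1 y1] [x2 y2] /allpairsP [[u1 v1] [hu1 hv1 [-> ->]]].
  move=> /allpairsP [[u2 v2] [hu2 hv2 [-> ->]]] /= e.
  have hc : pn c ((u1 + v1) - (u2 + v2)) by rewrite e subrr in_pn0.
  by have [-> ->] := key u1 v1 u2 v2 hu1 hv1 hu2 hv2 hc.
- move=> z1 z2 /allpairsP [[x1 y1] [hx1 hy1 ->]] /allpairsP [[x2 y2] [hx2 hy2 ->]] hc.
  by have [-> ->] := key x1 y1 x2 y2 hx1 hy1 hx2 hy2 hc.
Qed.

Lemma reps_undup (A : pred F) n s : all A s ->
  (forall x, A x -> exists2 a, a \in s & pn n (x - a)) ->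
  reps A n (undup (map (choose_rep s n) s)).
Proof.
move=> hA hc.
have self x : x \in s -> choose_rep s n x \in s /\ pn n (x - choose_rep s n x).
  by move=> hx; apply: choose_repP; exists x => //; rewrite subrr in_pn0.
apply: reps_of_uniq.
- apply/allP => z; rewrite mem_undup => /mapP [x hx ->].
  by apply: (allP hA); have [] := self x hx.
- move=> x hx; have [a ha hxa] := hc x hx; exists (choose_rep s n a).
    by rewrite mem_undup; apply: map_f.
  by apply: in_pn_sub_trans hxa _; have [] := self a ha.
- exact: undup_uniq.
- move=> z1 z2; rewrite !mem_undup => /mapP [x1 hx1 ->] /mapP [x2 hx2 ->] h.
  apply: choose_rep_congr; have [_ p1] := self x1 hx1; have [_ p2] := self x2 hx2.
  by apply: in_pn_sub_trans p1 _; apply: in_pn_sub_trans h _; rewrite in_pn_subC.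
Qed.

Lemma reps_addr a b rs x0 : a <= b -> reps (pn a) b rs -> pn a x0 ->
  reps (pn a) b (map (fun x => x + x0) rs).
Proof.
move=> ab h hx0; apply: (reps_map h).
- by move=> x hx; apply: in_pnD.
- by move=> y hy; exists (y - x0); [apply: in_pnB | rewrite subrK].
- by move=> x y _ _; rewrite opprD addrACA subrr addr0.
Qed.

Lemma reps_mull a b rs t : t != 0 -> reps (pn a) b rs ->
  reps (pn (val t + a)) (val t + b) (map (fun x => t * x) rs).
Proof.
move=> t0 h.
have ht : pn (val t) t by rewrite in_pnE.
have hti : pn (- val t) t^-1 by rewrite in_pnE ?invr_eq0 // valV.
have hmulV k x : pn (val t + k) (t * x) = pn k x.
  apply/idP/idP => hx; last exact: in_pnM.
  by have := in_pnM hti hx; rewrite addrA addNr add0r mulKf.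
apply: (reps_map h).
- by move=> x hx; apply: in_pnM.
- by move=> y hy; exists (t^-1 * y); [rewrite -hmulV (mulVKf t0) | rewrite (mulVKf t0)].
- by move=> x y _ _; rewrite -mulrBr hmulV.
Qed.

Lemma reps_unitMl n c U : unit_o val c -> reps (unit_o val) n U ->
  reps (unit_o val) n (map (fun x => c * x) U).
Proof.
move=> uc hU; apply: (reps_map hU).
- by move=> x; apply: unit_oM.
- by move=> y uy; exists (c^-1 * y); [apply/unit_oM/uy/unit_oV | exact/mulVKf/unit_o_neq0].
- by move=> x y _ _; rewrite -mulrBr in_pn_unitMl.
Qed.

Lemma reps_pn_self a : reps (pn a) a [:: 0].
Proof.
apply: reps_of_uniq => //=; first by rewrite in_pn0.
  by move=> x hx; exists 0; rewrite ?inE // subr0.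
by move=> u v; rewrite !inE => /eqP -> /eqP ->.
Qed.

Hypothesis val_uniformizer : exists varpi : F, varpi != 0 /\ val varpi = 1.
Hypothesis residue_finite : exists s : seq F, all (in_o val) s /\
  forall x, in_o val x -> exists2 a, a \in s & pn 1 (x - a).

Lemma val_surj k : exists t, t != 0 /\ val t = k.
Proof.
have [varpi [v0 v1]] := val_uniformizer.
have hp (n : nat) : varpi ^+ n != 0 /\ val (varpi ^+ n) = n%:Z.
  elim: n => [|n [h1 h2]]; first by rewrite expr0 oner_neq0 val1.
  by rewrite exprS mulf_neq0 // valM // h2 v1 -addn1 PoszD addrC.
case: k => n; first by exists (varpi ^+ n); apply: hp.
have [h1 h2] := hp n.+1; exists (varpi ^+ n.+1)^-1.
by rewrite invr_eq0 valV // h2 NegzE.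
Qed.

Lemma reps_exist a b : a <= b -> exists rs, reps (pn a) b rs.
Proof.
move=> ab; have -> : b = a + `|b - a|%N%:Z by rewrite gez0_abs ?subr_ge0 // subrKC.
have [s0 hs0] : exists s0, reps (pn 0) 1 s0.
  by have [s [hs1 hs2]] := residue_finite; eexists; exact: reps_undup hs1 hs2.
elim: `|b - a|%N => [|k [rs hrs]]; first by exists [:: 0]; rewrite addr0; apply: reps_pn_self.
have [t [t0 vt]] := val_surj (a + k%:Z).
have := reps_mull t0 hs0; rewrite vt addr0 => hsc.
exists [seq x + y | x <- rs, y <- map (fun x => t * x) s0].
rewrite -addn1 PoszD addrA; apply: reps_allpairs_addr hrs hsc; last by rewrite lerDl.
by rewrite lerDl.
Qed.

(** * Characters and the Z^J-span *)

Lemma sum_reps_char_eq0 (C : idomainType) a n rs (chi : F -> C) :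
  a <= n -> reps (pn a) n rs ->
  {morph chi : x y / x + y >-> x * y} -> (forall x, pn n x -> chi x = 1) ->
  forall z, pn a z -> chi z != 1 -> \sum_(x <- rs) chi x = 0.
Proof.
move=> an h chiD chi1 z hz cz.
have chi_congr x y : pn a x -> pn a y -> pn n (x - y) -> chi x = chi y.
  by move=> _ _ hxy; rewrite -(subrK y x) chiD chi1 // mul1r.
have e : \sum_(x <- rs) chi x = chi z * \sum_(x <- rs) chi x.
  rewrite -{1}(eq_big_reps (reps_addr an h hz) h chi_congr) big_map mulr_sumr.
  by apply: eq_bigr => x _; rewrite chiD mulrC.
have : (1 - chi z) * \sum_(x <- rs) chi x = 0 by rewrite mulrBl mul1r -e subrr.
by move/eqP; rewrite mulf_eq0 subr_eq0 eq_sym (negbTE cz) /= => /eqP.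
Qed.

Variables (C : numFieldType) (psi : F -> C).
Hypothesis psiD : {morph psi : x y / x + y >-> x * y}.
Hypothesis psi_o : forall x, in_o val x -> psi x = 1.
Hypothesis psi_pinv : exists x, pn (-1) x /\ psi x != 1.

Lemma psi0 : psi 0 = 1.
Proof. exact/psi_o/in_pn0. Qed.

Lemma psiNK x : psi (- x) * psi x = 1.
Proof. by rewrite -psiD addNr psi0. Qed.

Lemma psi_neq0 x : psi x != 0.
Proof. by apply: contra_eq_neq (psiNK x) => ->; rewrite mulr0 eq_sym oner_neq0. Qed.

Lemma natr_size_reps_neq0 A m rs : reps A m rs -> A 0 -> (size rs)%:R != 0 :> C.
Proof.
case=> _ hc _ /hc [a ha _]; rewrite pnatr_eq0 size_eq0.
by apply: contraTneq ha => ->.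
Qed.

Variable V : lmodType C.
(* [pz x] and [pd c] stand for pi(z(x)) and pi(d(c)). *)
Variables pz pd : F -> V -> V.
Hypothesis pz_lin : forall x, linear (pz x).
Hypothesis pd_lin : forall c, c != 0 -> linear (pd c).
Hypothesis pzD : forall x y v, pz x (pz y v) = pz (x + y) v.
Hypothesis pz_pd : forall c y v, c != 0 -> pz y (pd c v) = pd c (pz (c * y) v).
Hypothesis pdM : forall c c' v, c != 0 -> c' != 0 -> pd c (pd c' v) = pd (c * c') v.
Hypothesis pz_pd_smooth : forall v, exists n : nat,
  (forall x, pn n%:Z x -> pz x v = v) /\
  (forall c, c != 0 -> pn n%:Z (c - 1) -> pd c v = v).

Definition ZJ_span (w : V) : Prop := exists s : seq (C * F * V),
  w = \sum_(t <- s) t.1.1 *: (pz t.1.2 t.2 - psi t.1.2 *: t.2).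

Definition o_fixed (v : V) := forall x, in_o val x -> pz x v = v.
Definition units_fixed (v : V) := forall c, unit_o val c -> pd c v = v.
Definition pinv_sum_vanish (v : V) :=
  forall P, reps (pn (-1)) 0 P -> \sum_(a <- P) pz a v = 0.

Lemma span0 : ZJ_span 0.
Proof. by exists [::]; rewrite big_nil. Qed.

Lemma spanD u v : ZJ_span u -> ZJ_span v -> ZJ_span (u + v).
Proof. by move=> [s1 ->] [s2 ->]; exists (s1 ++ s2); rewrite big_cat. Qed.

Lemma spanZ a u : ZJ_span u -> ZJ_span (a *: u).
Proof.
move=> [s1 ->]; exists [seq (a * t.1.1, t.1.2, t.2) | t <- s1].
by rewrite big_map scaler_sumr; apply: eq_bigr => t _; rewrite scalerA.
Qed.

Lemma spanB u v : ZJ_span u -> ZJ_span v -> ZJ_span (u - v).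
Proof. by move=> hu hv; apply: spanD hu _; rewrite -scaleN1r; apply: spanZ. Qed.

Lemma span_gen x v : ZJ_span (pz x v - psi x *: v).
Proof. by exists [:: (1, x, v)]; rewrite big_cons big_nil addr0 scale1r. Qed.

Lemma span_sum (I : Type) (r : seq I) (P : pred I) (g : I -> V) :
  (forall i, P i -> ZJ_span (g i)) -> ZJ_span (\sum_(i <- r | P i) g i).
Proof. by move=> h; apply: big_ind => //; [exact: span0 | exact: spanD]. Qed.

Lemma span_eigen x e chi : pz x e = chi *: e -> chi != psi x -> ZJ_span e.
Proof.
move=> he hc.
have -> : e = (chi - psi x)^-1 *: (pz x e - psi x *: e).
  by rewrite he -scalerBl scalerA mulVf ?scale1r // subr_eq0.
exact/spanZ/span_gen.
Qed.

Lemma pz_twist_congr (n : nat) b w z z' : in_o val b ->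
  (forall x, pn n x -> pz x w = w) -> pn n (z - z') ->
  psi (- (b * z)) *: pz z w = psi (- (b * z')) *: pz z' w.
Proof.
move=> hb hw hzz.
have -> : - (b * z) = - (b * z') + b * (z' - z) by ring.
rewrite psiD (psi_o (x := b * (z' - z))) ?mulr1; last first.
  have hzz0 : pn 0 (z' - z) by rewrite in_pn_subC; exact: in_pnW hzz.
  by move: (in_pnM hb hzz0); rewrite addr0.
by rewrite -[in pz z w](subrKC z' z) -pzD hw.
Qed.

Lemma pz_psi_congr (n : nat) w z z' :
  (forall x, pn n x -> pz x w = w) -> pn n (z - z') ->
  psi (- z) *: pz z w = psi (- z') *: pz z' w.
Proof. by move=> hw /(pz_twist_congr (unit_o_in_o unit_o1) hw); rewrite !mul1r. Qed.

Definition psi_average (u : V) (R : seq F) := \sum_(y <- R) psi (- y) *: pz y u.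

Lemma psi_average_sub_span u R : ZJ_span (psi_average u R - (size R)%:R *: u).
Proof.
rewrite scaler_nat -sumr_const_seq -sumrB; apply: span_sum => y _.
have -> : psi (- y) *: pz y u - u = psi (- y) *: (pz y u - psi y *: u).
  by rewrite scalerBr scalerA psiNK scale1r.
exact/spanZ/span_gen.
Qed.

(** * Existence *)

Section Existence.
Variables (n : nat) (u : V) (R U : seq F).
Hypothesis n_gt0 : (0 < n)%N.
Hypothesis u_pz : forall x, pn n x -> pz x u = u.
Hypothesis u_pd : forall c, c != 0 -> pn n (c - 1) -> pd c u = u.
Hypothesis hR : reps (pn (- n%:Z)) n R.
Hypothesis hU : reps (unit_o val) n U.

Local Notation E := (psi_average u R).

Lemma pz_psi_average x : pn (- n%:Z) x -> pz x E = psi x *: E.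
Proof.
move=> hx; have hRx := reps_addr (leNz_nat n n) hR hx.
rewrite /psi_average -{2}(eq_big_reps hRx hR (fun z z' _ _ => pz_psi_congr u_pz)) big_map.
rewrite (lin_sum (pz_lin x)) scaler_sumr; apply: eq_bigr => y _.
rewrite (linZ (pz_lin x)) pzD [x + y]addrC scalerA -psiD.
by congr (psi _ *: _); ring.
Qed.

Lemma pd_psi_average c : pn n (c - 1) -> pd c E = E.
Proof.
move=> hc; have [c0 vc] : c != 0 /\ val c = 0.
  by apply: val_eq0_congr1; apply: in_pnW hc; rewrite lez_nat.
have oc : in_o val c by apply/unit_o_in_o/unit_oP.
have := reps_mull (invr_neq0 c0) hR; rewrite valV // vc oppr0 !add0r => hsc.
have := eq_big_reps hsc hR (fun z z' _ _ => pz_twist_congr oc u_pz).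
rewrite big_map /psi_average (lin_sum (pd_lin c0)) => e.
have pd_term y : psi (- y) *: pd c (pz y u) =
    psi (- (c * (c^-1 * y))) *: pz (c^-1 * y) u.
  by rewrite [in RHS]mulVKf // -[in pd c _](mulVKf c0 y) -pz_pd // u_pd.
under eq_bigr => y _ do rewrite (linZ (pd_lin c0)) pd_term.
rewrite e; apply: eq_big_seq => z hz; congr (_ *: _).
have -> : - (c * z) = - z + - ((c - 1) * z) by ring.
rewrite psiD (psi_o (x := - ((c - 1) * z))) ?mulr1 // /in_o in_pnN.
by have := in_pnM hc (reps_mem hR hz); rewrite addrN.
Qed.

Lemma pz_pd_psi_average c x : c != 0 -> pn (- n%:Z) (c * x) ->
  pz x (pd c E) = psi (c * x) *: pd c E.
Proof. by move=> c0 hx; rewrite pz_pd // pz_psi_average // (linZ (pd_lin c0)). Qed.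

Lemma pd_psi_average_in_span c : unit_o val c -> ~~ pn n (c - 1) -> ZJ_span (pd c E).
Proof.
move=> /unit_oP [c0 vc] hnc; have [x0 [x0p x0n]] := psi_pinv.
have x00 : x0 != 0 by apply: contraNneq x0n => ->; rewrite psi0.
set d := c - 1 in hnc *.
have d0 : d != 0 by apply: contraNneq hnc => ->; exact: in_pn0.
have vd : val d < n by move: hnc; rewrite in_pnE // -ltNge.
have vx0 : -1 <= val x0 by rewrite -in_pnE.
set x := x0 / d.
have hx : pn (- n%:Z) x.
  by rewrite in_pnE ?mulf_neq0 ?invr_eq0 // valM ?invr_eq0 // valV //; lia.
have ecx : c * x = x + x0 by rewrite /x /d; field.
(* the eigencharacter [psi (c x) = psi x psi x0] of [pd c E] differs from [psi x] *)
apply: (span_eigen (x := x) (chi := psi (c * x))).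
  apply: pz_pd_psi_average; rewrite // ecx; apply: in_pnD => //.
  by apply: in_pnW x0p; rewrite lerN2 lez_nat.
by rewrite ecx psiD -[X in _ != X]mulr1 (inj_eq (mulfI (psi_neq0 x))).
Qed.

Definition lift_vec := (size R)%:R^-1 *: \sum_(c <- U) pd c E.

Lemma lift_vec_sub_span : ZJ_span (lift_vec - u).
Proof.
rewrite /lift_vec (bigID (fun c => pn n (c - 1))) /=.
have [c1 e1] := reps_filter_near hU unit_o1.
rewrite -big_filter e1 big_cons big_nil addr0.
have : c1 \in [seq a <- U | pn n (a - 1)] by rewrite e1 inE.
rewrite mem_filter => /andP [hc1 _]; rewrite pd_psi_average //.
set k : C := (size R)%:R; have k0 : k != 0 := natr_size_reps_neq0 hR (in_pn0 _).
set rest := \sum_(c <- U | _) _.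
have -> : k^-1 *: (E + rest) - u = k^-1 *: (E - k *: u) + k^-1 *: rest.
  by rewrite scalerDr scalerBr scalerA mulVf // scale1r addrAC.
apply: spanD; apply: spanZ; first exact: psi_average_sub_span.
rewrite /rest big_seq_cond; apply: span_sum => c /andP [cU hnc].
exact: pd_psi_average_in_span (reps_mem hU cU) hnc.
Qed.

Lemma lift_vec_o_fixed : o_fixed lift_vec.
Proof.
move=> x hx; rewrite /lift_vec (linZ (pz_lin x)) (lin_sum (pz_lin x)); congr (_ *: _).
apply: eq_big_seq => c hc; have uc := reps_mem hU hc.
have hcx : in_o val (c * x) by rewrite /in_o in_pn_unitMl.
rewrite pz_pd_psi_average ?psi_o ?scale1r ?(unit_o_neq0 uc) //.
by apply: in_pnW hcx; rewrite oppr_le0.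
Qed.

Lemma lift_vec_pinv_sum : pinv_sum_vanish lift_vec.
Proof.
move=> P hP.
under eq_bigr => a _ do rewrite /lift_vec (linZ (pz_lin a)) (lin_sum (pz_lin a)).
rewrite -scaler_sumr exchange_big /= big1_seq ?scaler0 // => c /andP [_ hc].
have uc := reps_mem hU hc; have c0 := unit_o_neq0 uc.
rewrite (eq_big_seq (fun a => psi (c * a) *: pd c E)); last first.
  move=> a ha; apply: pz_pd_psi_average => //.
  apply: in_pnW (_ : - n%:Z <= -1) _; first by rewrite lerN2 lez_nat.
  by rewrite in_pn_unitMl // (reps_mem hP).
rewrite -scaler_suml; have [x0 [x0p x0n]] := psi_pinv.
(* [a |-> psi (c a)] is a character of [p^-1 / o], nontrivial at [c^-1 x0] *)
rewrite (@sum_reps_char_eq0 _ (-1) 0 P (fun a => psi (c * a)) _ hP _ _ (c^-1 * x0))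
  ?scale0r //.
- by move=> a b; rewrite mulrDr psiD.
- by move=> a ha; apply: psi_o; rewrite /in_o in_pn_unitMl.
- by rewrite in_pn_unitMl // unit_oV.
- by rewrite mulVKf.
Qed.

Lemma lift_vec_units_fixed : units_fixed lift_vec.
Proof.
move=> c' uc'; have c'0 := unit_o_neq0 uc'.
rewrite /lift_vec (linZ (pd_lin c'0)) (lin_sum (pd_lin c'0)); congr (_ *: _).
rewrite (eq_big_seq (fun c => pd (c' * c) E)); last first.
  by move=> c hc; rewrite pdM // (unit_o_neq0 (reps_mem hU hc)).
rewrite -(big_map (fun c => c' * c) xpredT (fun z => pd z E)).
apply: (eq_big_reps (reps_unitMl uc' hU) hU) => z z' uz uz' hzz.
have z'0 := unit_o_neq0 uz'; have z0 := unit_o_neq0 uz.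
rewrite -[z in LHS](mulVKf z'0 z) -pdM ?mulf_neq0 ?invr_eq0 //.
rewrite pd_psi_average // -[1](mulVf z'0) -mulrBr in_pn_unitMl //.
exact: unit_oV.
Qed.

End Existence.

Lemma lift_exists u :
  exists v, [/\ ZJ_span (v - u), o_fixed v, pinv_sum_vanish v & units_fixed v].
Proof.
have [m [u_pz u_pd]] := pz_pd_smooth u.
have u_pz' x : pn m.+1 x -> pz x u = u.
  by move=> hx; apply: u_pz; apply: in_pnW hx; rewrite lez_nat.
have u_pd' c : c != 0 -> pn m.+1 (c - 1) -> pd c u = u.
  by move=> c0 hc; apply: u_pd => //; apply: in_pnW hc; rewrite lez_nat.
have [R hR] := reps_exist (leNz_nat m.+1 m.+1).
have [R0 hR0] := reps_exist (isT : 0 <= m.+1%:Z).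
have hU := reps_filter hR0 unit_o_in_o
  (fun x y ux _ => unit_o_congr ux \o in_pnW (isT : 1 <= m.+1%:Z)).
exists (lift_vec u R [seq c <- R0 | unit_o val c]).
by split; [apply: (lift_vec_sub_span (n := m.+1)) | apply: (lift_vec_o_fixed (n := m.+1)) |
  apply: (lift_vec_pinv_sum (n := m.+1)) | apply: (lift_vec_units_fixed (n := m.+1))].
Qed.

(** * Uniqueness *)

Lemma psi_average_lin R : linear (psi_average ^~ R).
Proof.
move=> a u1 u2; rewrite /psi_average scaler_sumr -big_split; apply: eq_bigr => y _.
by rewrite pz_lin scalerDr !scalerA mulrC.
Qed.

Lemma psi_average_pz x u R : psi_average (pz x u) R = pz x (psi_average u R).
Proof.
rewrite /psi_average (lin_sum (pz_lin x)); apply: eq_bigr => y _.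
by rewrite (linZ (pz_lin x)) !pzD addrC.
Qed.

Lemma pinv_sum_vanishP v : o_fixed v ->
  is_integral_pinv val (fun x => pz x v) 0 <-> pinv_sum_vanish v.
Proof.
move=> v_o; split.
  move=> [N [_ [ro [rp [hro hrp e]]]]] P hP.
  have ro0 := natr_size_reps_neq0 hro (in_pn0 _).
  have sum_rp : \sum_(a <- rp) pz a v = 0.
    by apply: (scalerI (invr_neq0 ro0)); rewrite scaler0 -e.
  have hQ := reps_allpairs_addr (lerN10 _) (isT : 0 <= N%:Z) hP hro.
  have v_congr z z' : pn (-1) z -> pn (-1) z' -> pn N (z - z') -> pz z v = pz z' v.
    move=> _ _ hzz; rewrite -[in pz z v](subrKC z' z) -pzD v_o //.
    by apply: in_pnW hzz; rewrite lez_nat.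
  have := eq_big_reps hrp hQ v_congr; rewrite sum_rp big_allpairs_dep /= => sumQ.
  apply: (scalerI ro0); rewrite scaler0 [RHS]sumQ scaler_sumr; apply: eq_bigr => a _.
  rewrite scaler_nat -sumr_const_seq; apply: eq_big_seq => b hb.
  by rewrite -pzD [pz b v]v_o //; apply: reps_mem hro hb.
move=> hv; have [rp hrp] := reps_exist (lerN10 _).
exists 0%N; split; first by move=> x y _ hy; rewrite -pzD v_o.
by exists [:: 0], rp; split; rewrite ?hv ?scaler0 //; apply: reps_pn_self.
Qed.

Lemma span_level (sl : seq (C * F * V)) : exists N : nat, (0 < N)%N /\
  forall t, t \in sl -> (forall x, pn N x -> pz x t.2 = t.2) /\ pn (- N%:Z) t.1.2.
Proof.
elim: sl => [|t sl [N [N0 hN]]]; first by exists 1%N.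
have [m [hm _]] := pz_pd_smooth t.2; have [k hk] := in_pn_neg_val t.1.2.
exists (maxn N (maxn m k)); split; first by rewrite (leq_trans N0) ?leq_maxl.
have leN j : (j <= maxn N (maxn m k))%N -> - (maxn N (maxn m k))%:Z <= - j%:Z.
  by rewrite lerN2 lez_nat.
move=> t'; rewrite inE => /orP [/eqP -> | /hN [h1 h2]]; split.
- by move=> x hx; apply: hm; apply: in_pnW hx; rewrite lez_nat; lia.
- by apply: in_pnW hk; apply: leN; lia.
- by move=> x hx; apply: h1; apply: in_pnW hx; rewrite lez_nat; lia.
- by apply: in_pnW h2; apply: leN; lia.
Qed.

Lemma span_psi_average_eq0 w : ZJ_span w -> o_fixed w -> exists M : nat, (0 < M)%N /\
  forall RM, reps (pn (- M%:Z)) 0 RM -> psi_average w RM = 0.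
Proof.
move=> [sl ew] w_o; have [N [N0 hN]] := span_level sl.
exists N; split=> // RM hRM.
have [R' hR'] := reps_exist (leNz_nat N N).
have lin := psi_average_lin R'.
have Ew0 : psi_average w R' = 0.
  rewrite ew (lin_sum lin) big1_seq // => t /andP [_ /hN [t_fix t_val]].
  rewrite (linZ lin) (linB lin) (linZ lin) psi_average_pz.
  by rewrite (pz_psi_average (n := N)) ?subrr ?scaler0.
have [R0 hR0] := reps_exist (isT : 0 <= N%:Z).
have hS := reps_allpairs_addr (leNz_nat N 0) (isT : 0 <= N%:Z) hRM hR0.
have w_N x : pn N x -> pz x w = w by move=> hx; apply: w_o; apply: in_pnW hx.
have := eq_big_reps hR' hS (fun z z' _ _ => pz_psi_congr w_N).
rewrite -/(psi_average w R') Ew0 big_allpairs_dep /= => e.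
apply: (scalerI (natr_size_reps_neq0 hR0 (in_pn0 _))); rewrite scaler0 [RHS]e scaler_sumr.
apply: eq_bigr => a _; rewrite scaler_nat -sumr_const_seq; apply: eq_big_seq => b hb.
have ob : in_o val b by apply: reps_mem hR0 hb.
by rewrite opprD psiD (psi_o (x := - b)) ?mulr1 -?pzD ?(w_o b ob) // /in_o in_pnN.
Qed.

Lemma sum_psi_o_in R0 y : all (in_o val) R0 -> in_o val y ->
  \sum_(b <- R0) psi (- (b * y)) = (size R0)%:R.
Proof.
move=> /allP R0o oy; rewrite -(sumr_const_seq R0 1).
apply: eq_big_seq => b /R0o ob; apply: psi_o; rewrite /in_o in_pnN.
by have := in_pnM ob oy; rewrite addr0.
Qed.

Lemma sum_psi_o_out (M : nat) R0 y : reps (pn 0) M R0 -> pn (- M%:Z) y -> ~~ in_o val y ->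
  \sum_(b <- R0) psi (- (b * y)) = 0.
Proof.
move=> hR0 hy noy; have [x0 [x0p x0n]] := psi_pinv.
have y0 : y != 0 by apply: contraNneq noy => ->; apply: in_pn0.
have x00 : x0 != 0 by apply: contraNneq x0n => ->; rewrite psi0.
have vy : val y < 0 by move: noy; rewrite /in_o in_pnE // -ltNge.
have vx0 : -1 <= val x0 by rewrite -in_pnE.
(* [b |-> psi (- b y)] is a character of [o / p^M], nontrivial at [- x0 / y] *)
apply: (@sum_reps_char_eq0 _ 0 M R0 _ (isT : 0 <= M%:Z) hR0 _ _ (- (x0 / y))).
- by move=> a b; rewrite mulrDl opprD psiD.
- move=> a ha; apply: psi_o; rewrite /in_o in_pnN.
  by have := in_pnM ha hy; rewrite addrN.
- rewrite in_pnN in_pnE ?mulf_neq0 ?invr_eq0 // valM ?invr_eq0 // valV //; lia.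
- by rewrite mulNr opprK divfK.
Qed.

Section Uniqueness.
Variables (w : V) (M : nat).
Hypothesis w_o : o_fixed w.
Hypothesis w_units : units_fixed w.
Hypothesis w_pinv : pinv_sum_vanish w.
Hypothesis M_gt0 : (0 < M)%N.
Hypothesis w_avg : forall RM, reps (pn (- M%:Z)) 0 RM -> psi_average w RM = 0.

Section TwistedSum.
Variable RM : seq F.
Hypothesis hRM : reps (pn (- M%:Z)) 0 RM.

Definition twisted_sum b := \sum_(y <- RM) psi (- (b * y)) *: pz y w.

Lemma twisted_sum_unit b : unit_o val b -> twisted_sum b = 0.
Proof.
move=> /unit_oP [b0 vb].
have := reps_mull b0 hRM; rewrite vb !add0r => /w_avg; rewrite /psi_average big_map => h.
transitivity (pd b (\sum_(y <- RM) psi (- (b * y)) *: pz (b * y) w)); last first.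
  by rewrite h (lin0 (pd_lin b0)).
rewrite (lin_sum (pd_lin b0)); apply: eq_bigr => y _.
by rewrite (linZ (pd_lin b0)) -pz_pd // w_units //; apply/unit_oP.
Qed.

Lemma twisted_sum_nonunit b : in_o val b -> ~~ unit_o val b -> twisted_sum b = 0.
Proof.
move=> ob nub; have pb := in_o_nonunit ob nub.
have leM : - M%:Z <= -1 by rewrite lerN2 lez_nat.
have [RM1 hRM1] := reps_exist leM; have [P hP] := reps_exist (lerN10 _).
have hS := reps_allpairs_addr leM (lerN10 _) hRM1 hP.
rewrite /twisted_sum (eq_big_reps hRM hS (fun z z' _ _ => pz_twist_congr ob w_o)).
rewrite big_allpairs_dep big1_seq // => a /andP [_ ha].
rewrite (eq_big_seq (fun c => psi (- (b * a)) *: pz a (pz c w))); last first.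
  move=> c hc; rewrite pzD mulrDr opprD psiD (psi_o (x := - (b * c))) ?mulr1 //.
  by rewrite /in_o in_pnN; have := in_pnM pb (reps_mem hP hc); rewrite addrN.
by rewrite -scaler_sumr -(lin_sum (pz_lin a)) w_pinv // (lin0 (pz_lin a)) scaler0.
Qed.

Lemma twisted_sum_fourier R0 : reps (pn 0) M R0 ->
  \sum_(b <- R0) twisted_sum b = (size R0)%:R *: w.
Proof.
move=> hR0; rewrite /twisted_sum exchange_big /=.
under eq_bigr => y _ do rewrite -scaler_suml.
rewrite (bigID (fun y => pn 0 (y - 0))) /=.
have [y1 e1] := reps_filter_near hRM (in_pn0 _).
rewrite -big_filter e1 big_cons big_nil.
have : y1 \in [seq a <- RM | pn 0 (a - 0)] by rewrite e1 inE.
rewrite mem_filter subr0 => /andP [oy1 _].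
rewrite [X in _ + X]big_seq_cond [X in _ + X]big1 ?addr0; last first.
  move=> y /andP [yRM]; rewrite subr0 => noy.
  by rewrite (sum_psi_o_out hR0 _ noy) ?scale0r //; apply: reps_mem hRM yRM.
by rewrite w_o // sum_psi_o_in //; case: hR0.
Qed.

End TwistedSum.

Lemma fixed_vanishing_eq0 : w = 0.
Proof.
have [RM hRM] := reps_exist (leNz_nat M 0).
have [R0 hR0] := reps_exist (isT : 0 <= M%:Z).
apply: (scalerI (natr_size_reps_neq0 hR0 (in_pn0 _))).
rewrite scaler0 -(twisted_sum_fourier hRM hR0) big1_seq // => b /andP [_ hb].
have ob := reps_mem hR0 hb; have [ub|nub] := boolP (unit_o val b).
  exact: twisted_sum_unit.
exact: twisted_sum_nonunit.
Qed.

End Uniqueness.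

Lemma o_fixedB v v' : o_fixed v -> o_fixed v' -> o_fixed (v - v').
Proof. by move=> hv hv' x ox; rewrite (linB (pz_lin x)) hv // hv'. Qed.

Lemma units_fixedB v v' : units_fixed v -> units_fixed v' -> units_fixed (v - v').
Proof. by move=> hv hv' c uc; rewrite (linB (pd_lin (unit_o_neq0 uc))) hv // hv'. Qed.

Lemma pinv_sum_vanishB v v' :
  pinv_sum_vanish v -> pinv_sum_vanish v' -> pinv_sum_vanish (v - v').
Proof.
move=> hv hv' P hP; under eq_bigr => a _ do rewrite (linB (pz_lin a)).
by rewrite sumrB hv // hv' // subrr.
Qed.

Theorem ZJ_lift_exists_unique u : exists! v,
  [/\ ZJ_span (v - u), o_fixed v, is_integral_pinv val (fun x => pz x v) 0
    & units_fixed v].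
Proof.
have [v [v_span v_o v_pinv v_units]] := lift_exists u.
exists v; split; first by split=> //; apply/pinv_sum_vanishP.
move=> v' [v'_span v'_o /(pinv_sum_vanishP v'_o) v'_pinv v'_units].
apply/eqP; rewrite eq_sym -subr_eq0; apply/eqP.
have w_span : ZJ_span (v' - v).
  have -> : v' - v = (v' - u) - (v - u) by rewrite opprB addrA subrK.
  exact: spanB.
have w_o := o_fixedB v'_o v_o.
have [M [M_gt0 w_avg]] := span_psi_average_eq0 w_span w_o.
exact: (fixed_vanishing_eq0 w_o (units_fixedB v'_units v_units)
  (pinv_sum_vanishB v'_pinv v_pinv) M_gt0 w_avg).
Qed.

End LocalField.
(** * The representation of GSp(4) *)

Ltac mx4 := apply/matrixP => -[[|[|[|[|?]]]] ?] -[[|[|[|[|?]]]] ?] //;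
  rewrite !mxE; (repeat rewrite !big_ord_recl !big_ord0 !mxE) => /=.

Section Matrices.
Variable F : fieldType.

Lemma zmxD (x y : F) : zmx x *m zmx y = zmx (x + y).
Proof.
rewrite /zmx mulmxDl !mulmxDr !mul1mx !mulmx1 -scalemxAl -scalemxAr mul_delta_mx_cond /=.
by rewrite mulr0n !scaler0 addr0 scalerDl addrA addrAC.
Qed.

Lemma zmx_dmx (c y : F) : zmx y *m dmx c = dmx c *m zmx (c * y).
Proof. rewrite /zmx /dmx; mx4; ring. Qed.

Lemma dmxM (c c' : F) : dmx c *m dmx c' = dmx (c * c').
Proof. rewrite /dmx; mx4; ring. Qed.

Lemma zmx_GSp4 (x : F) : in_GSp4 (zmx x).
Proof. exists 1; split; first exact: oner_neq0. rewrite /zmx /Jmx; mx4; ring. Qed.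

Lemma dmx_GSp4 (c : F) : c != 0 -> in_GSp4 (dmx c).
Proof. move=> c0; exists c; split=> //. rewrite /dmx /Jmx; mx4; ring. Qed.

End Matrices.

Lemma zmx_Kn (F : fieldType) (val : F -> int) (n : nat) (x : F) :
  in_pn val n%:Z x -> in_Kn val n (zmx x).
Proof.
move=> hx; split; first exact: zmx_GSp4.
move=> i j; rewrite /zmx addrAC subrr add0r !mxE.
by case: (_ && _); rewrite ?mulr1 ?mulr0 // /in_pn eqxx.
Qed.

Lemma dmx_Kn (F : fieldType) (val : F -> int) (n : nat) (c : F) :
  c != 0 -> in_pn val n%:Z (c - 1) -> in_Kn val n (dmx c).
Proof.
move=> c0 hc; split; first exact: dmx_GSp4.
move=> [[|[|[|[|?]]]] ?] [[|[|[|[|?]]]] ?] //; rewrite !mxE /=.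
all: by rewrite ?mulr1n ?mulr0n ?subrr ?subr0 ?oppr0 ?/in_pn ?eqxx.
Qed.

Section SmoothRep.
Variables (F : fieldType) (val : F -> int) (C : nzRingType) (V : lmodType C).
Variable pi : 'M[F]_4 -> V -> V.
Hypothesis hpi : smooth_rep val pi.

Lemma pi_zmx_lin x : linear (pi (zmx x)).
Proof. by case: hpi => pi_lin _ _ _; apply/pi_lin/zmx_GSp4. Qed.

Lemma pi_dmx_lin c : c != 0 -> linear (pi (dmx c)).
Proof. by case: hpi => pi_lin _ _ _ c0; apply/pi_lin/dmx_GSp4. Qed.

Lemma pi_zmxD x y v : pi (zmx x) (pi (zmx y) v) = pi (zmx (x + y)) v.
Proof. by case: hpi => _ _ piM _; rewrite -piM ?zmxD //; apply: zmx_GSp4. Qed.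

Lemma pi_zmx_dmx c y v : c != 0 ->
  pi (zmx y) (pi (dmx c) v) = pi (dmx c) (pi (zmx (c * y)) v).
Proof.
case: hpi => _ _ piM _ c0.
by rewrite -piM ?zmx_dmx ?piM //; by [apply: zmx_GSp4 | apply: dmx_GSp4].
Qed.

Lemma pi_dmxM c c' v : c != 0 -> c' != 0 ->
  pi (dmx c) (pi (dmx c') v) = pi (dmx (c * c')) v.
Proof. by case: hpi => _ _ piM _ c0 c'0; rewrite -piM ?dmxM //; apply: dmx_GSp4. Qed.

Lemma pi_smooth_zmx_dmx v : exists n : nat,
  (forall x, in_pn val n%:Z x -> pi (zmx x) v = v) /\
  (forall c, c != 0 -> in_pn val n%:Z (c - 1) -> pi (dmx c) v = v).
Proof.
case: hpi => _ _ _ /(_ v) [n [_ hn]]; exists n; split.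
  by move=> x hx; apply/hn/zmx_Kn.
by move=> c c0 hc; apply/hn/dmx_Kn.
Qed.

End SmoothRep.

Theorem proposition7p2p3 (R : realType) (F : fieldType) (val : F -> int)
    (hF : local_field_char0 val)
    (psi : F -> R[i]) (hpsi : add_char psi) (hcond : conductor_o val psi)
    (V : lmodType R[i]) (pi : 'M[F]_4 -> V -> V) (hpi : smooth_rep val pi) :
  forall u : V, exists! v : V,
    [/\ in_ZJ_span pi psi (v - u),
        (forall x, in_o val x -> pi (zmx x) v = v),
        is_integral_pinv val (fun x => pi (zmx x) v) 0
      & (forall c, unit_o val c -> pi (dmx c) v = v)].
Proof.
case: hF => valM val_ultra val_uniformizer [residue_finite _ _].
case: hcond => psi_o psi_pinv.
exact: (ZJ_lift_exists_unique valM val_ultra val_uniformizer residue_finite hpsi psi_o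
  psi_pinv (pi_zmx_lin hpi) (pi_dmx_lin hpi) (pi_zmxD hpi) (pi_zmx_dmx hpi)
  (pi_dmxM hpi) (pi_smooth_zmx_dmx hpi)).
Qed.
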